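(* With the notation of the context, the following equalities of sets of eigenvalues hold: \[\Lambda_N[T]\cup\Lambda_D[T]=\Lambda_P[2T],\quad \Lambda_N[T]\cup\Lambda_{M_1}[T]=\Lambda_N[2T],\quad \Lambda_D[T]\cup\Lambda_{M_2}[T]=\Lambda_D[2T],\] \[\Lambda_{M_1}[T]\cup\Lambda_{M_2}[T]=\Lambda_A[2T],\quad \Lambda_N[T]\cup\Lambda_D[T]\cup\Lambda_{M_1}[T]\cup\Lambda_{M_2}[T]=\Lambda_P[4T].\] Moreover, $\Lambda_{M_1}[T]=\check\Lambda_{M_2}[T]$ and $\Lambda_{M_2}[T]=\check\Lambda_{M_1}[T]$.
   Context: Fix $n\ge 1$, $T>0$, $I=[0,T]$, $J=[0,2T]$. $W^{2n,1}(K)$: $u\in C^{2n-1}(K)$ with $u^{(2n-1)}$ absolutely continuous. Let $a_0,\dots,a_{2n-1}\in L^{\alpha}(I)$, $\alpha\ge1$, $Lu=u^{(2n)}+\sum_{k=0}^{2n-1}a_ku^{(k)}$ on $I$. $\widetilde L u=u^{(2n)}+\sum_{k=0}^{n-1}(\hat a_{2k+1}u^{(2k+1)}+\tilde a_{2k}u^{(2k)})$ on $J$, where $\tilde a_{2k}=a_{2k}$, $\hat a_{2k+1}=a_{2k+1}$ on $I$, and $\tilde a_{2k}(t)=a_{2k}(2T-t)$, $\hat a_{2k+1}(t)=-a_{2k+1}(2T-t)$ for $t\in(T,2T]$; $\widetilde{\widetilde L}$ on $[0,4T]$ is obtained by the same construction from $\widetilde L$ (reflection about $2T$). $\check L u(t)=u^{(2n)}(t)+\sum_{k=0}^{2n-1}(-1)^ka_k(T-t)u^{(k)}(t)$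 on $I$. For an operator $M$ and $\lambda\in\mathbb R$, $M[\lambda]u=Mu+\lambda u$ (i.e. the zero-order coefficient is increased by $\lambda$). A real $\lambda$ is an eigenvalue of the problem ''$M$ on $X$'' if $M[\lambda]u=0$ a.e. has a nontrivial solution $u\in X$. Spaces ($k=0,\dots,n-1$ unless stated): $X_{N,T}$: $u^{(2k+1)}(0)=u^{(2k+1)}(T)=0$; $X_{D,T}$: $u^{(2k)}(0)=u^{(2k)}(T)=0$; $X_{M_1,T}$: $u^{(2k+1)}(0)=u^{(2k)}(T)=0$; $X_{M_2,T}$: $u^{(2k)}(0)=u^{(2k+1)}(T)=0$ (in $W^{2n,1}(I)$); $X_{P,2T}$: $u^{(k)}(0)=u^{(k)}(2T)$, $k=0,\dots,2n-1$; $X_{A,2T}$: $u^{(k)}(0)=-u^{(k)}(2T)$, $k=0,\dots,2n-1$; $X_{N,2T}$: $u^{(2k+1)}(0)=u^{(2k+1)}(2T)=0$; $X_{D,2T}$: $u^{(2k)}(0)=u^{(2k)}(2T)=0$ (in $W^{2n,1}(J)$); $X_{P,4T}$: $u^{(k)}(0)=u^{(k)}(4T)$, $k=0,\dots,2n-1$ (in $W^{2n,1}([0,4T])$). $\Lambda_N[T],\Lambda_D[T],\Lambda_{M_1}[T],\Lambda_{M_2}[T]$ are the eigenvalue sets of $L$ on $X_{N,T},X_{D,T},X_{M_1,T},X_{M_2,T}$; $\Lambda_P[2T],\Lambda_A[2T],\Lambda_N[2T],\Lambda_D[2T]$ those of $\widetilde L$ on $X_{P,2T},X_{A,2T},X_{N,2T},X_{D,2T}$;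 $\Lambda_P[4T]$ that of $\widetilde{\widetilde L}$ on $X_{P,4T}$; $\check\Lambda_{M_1}[T],\check\Lambda_{M_2}[T]$ those of $\check L$ on $X_{M_1,T},X_{M_2,T}$. *)

(* classical reals. Lebesgue measure notions are defined
   elementarily below (covers by countable families of open intervals). *)
From Stdlib Require Import Reals Lra Lia.
Open Scope R_scope.

Definition Icc (L t : R) : Prop := 0 <= t <= L.

Definition covers (S : R -> Prop) (a b : nat -> R) : Prop :=
  (forall i, a i <= b i) /\ (forall t, S t -> exists i, a i < t < b i).

Definition null (S : R -> Prop) : Prop :=
  forall eps, 0 < eps -> exists a b, covers S a b /\
    forall N, sum_f_R0 (fun i => b i - a i) N <= eps.

Definition ae (L : R) (P : R -> Prop) : Prop :=
  null (fun t => Icc L t /\ ~ P t).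

Definition outer_ge (S : R -> Prop) (x : R) : Prop :=
  forall a b, covers S a b -> forall eps, 0 < eps ->
    exists N, x - eps <= sum_f_R0 (fun i => b i - a i) N.

Definition measurable (E : R -> Prop) : Prop :=
  forall eps, 0 < eps -> exists a b, covers E a b /\
    exists a' b', covers (fun t => (exists i, a i < t < b i) /\ ~ E t) a' b' /\
      forall N, sum_f_R0 (fun i => b' i - a' i) N <= eps.

(** |x|^alpha (with 0^alpha = 0). *)
Definition powabs (x alpha : R) : R :=
  if Req_EM_T x 0 then 0 else Rpower (Rabs x) alpha.

(** f in L^alpha([0,L]): f measurable on [0,L] and the Lebesgue integral of
    |f|^alpha over [0,L] is finite (bounded over nonnegative simple functions
    below |f|^alpha). *)
Definition Lp (L alpha : R) (f : R -> R) : Prop :=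
  (forall c, measurable (fun t => Icc L t /\ c < f t)) /\
  exists M, forall (N : nat) (c x : nat -> R) (E : nat -> R -> Prop),
    (forall i, (i <= N)%nat ->
       0 <= c i /\ 0 <= x i /\ measurable (E i) /\ outer_ge (E i) (x i) /\
       (forall t, E i t -> Icc L t /\ c i <= powabs (f t) alpha)) ->
    (forall i j, (i <= N)%nat -> (j <= N)%nat -> i <> j ->
       forall t, E i t -> ~ E j t) ->
    sum_f_R0 (fun i => c i * x i) N <= M.

(** Derivative of f at t relative to [0,L] (one-sided at endpoints). *)
Definition deriv_in (L : R) (f : R -> R) (t l : R) : Prop :=
  forall eps, 0 < eps -> exists delta, 0 < delta /\
    forall h, h <> 0 -> Rabs h < delta -> Icc L (t + h) ->
      Rabs ((f (t + h) - f t) / h - l) < eps.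

Definition abs_cont (L : R) (f : R -> R) : Prop :=
  forall eps, 0 < eps -> exists delta, 0 < delta /\
    forall (N : nat) (x y : nat -> R),
      (forall i, (i <= N)%nat -> 0 <= x i /\ x i <= y i /\ y i <= L) ->
      (forall i j, (i <= N)%nat -> (j <= N)%nat -> i <> j ->
         y i <= x j \/ y j <= x i) ->
      sum_f_R0 (fun i => y i - x i) N < delta ->
      sum_f_R0 (fun i => Rabs (f (y i) - f (x i))) N < eps.

(** u in W^{2n,1}([0,L]) with D k = u^{(k)} on [0,L] for k <= 2n-1:
    u in C^{2n-1}([0,L]) and u^{(2n-1)} absolutely continuous. *)
Definition W2n1 (n : nat) (L : R) (u : R -> R) (D : nat -> R -> R) : Prop :=
  (forall t, Icc L t -> D 0%nat t = u t) /\
  (forall k t, (k < 2 * n - 1)%nat -> Icc L t -> deriv_in L (D k) t (D (S k) t)) /\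
  abs_cont L (D (2 * n - 1)%nat).

Definition bcN (n : nat) (L : R) (D : nat -> R -> R) : Prop :=
  forall k, (k < n)%nat -> D (2*k+1)%nat 0 = 0 /\ D (2*k+1)%nat L = 0.
Definition bcD (n : nat) (L : R) (D : nat -> R -> R) : Prop :=
  forall k, (k < n)%nat -> D (2*k)%nat 0 = 0 /\ D (2*k)%nat L = 0.
Definition bcM1 (n : nat) (L : R) (D : nat -> R -> R) : Prop :=
  forall k, (k < n)%nat -> D (2*k+1)%nat 0 = 0 /\ D (2*k)%nat L = 0.
Definition bcM2 (n : nat) (L : R) (D : nat -> R -> R) : Prop :=
  forall k, (k < n)%nat -> D (2*k)%nat 0 = 0 /\ D (2*k+1)%nat L = 0.
Definition bcP (n : nat) (L : R) (D : nat -> R -> R) : Prop :=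
  forall k, (k < 2 * n)%nat -> D k 0 = D k L.
Definition bcA (n : nat) (L : R) (D : nat -> R -> R) : Prop :=
  forall k, (k < 2 * n)%nat -> D k 0 = - D k L.

Definition eigenvalue (n : nat) (L : R) (b : nat -> R -> R)
    (BC : nat -> R -> (nat -> R -> R) -> Prop) (lam : R) : Prop :=
  exists (u : R -> R) (D : nat -> R -> R),
    W2n1 n L u D /\ BC n L D /\ (exists t, Icc L t /\ u t <> 0) /\
    ae L (fun t => exists l, deriv_in L (D (2 * n - 1)%nat) t l /\
       l + sum_f_R0 (fun k => b k t * D k t) (2 * n - 1) + lam * u t = 0).

(** Reflection of the coefficients about S: on [0,S] unchanged, on (S,2S]
    b_k(t) := (-1)^k b_k(2S - t)  (gives tilde a_{2k}, hat a_{2k+1}). *)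
Definition refl (S : R) (b : nat -> R -> R) (k : nat) (t : R) : R :=
  if Rle_dec t S then b k t else (-1) ^ k * b k (2 * S - t).

Definition checkc (T : R) (a : nat -> R -> R) (k : nat) (t : R) : R :=
  (-1) ^ k * a k (T - t).

From Stdlib Require Import Reals Lra Lia FunctionalExtensionality Classical.
Open Scope R_scope.

(** Write every boundary condition on [0,L] as a pair of parities of
    the derivatives (u^{(k)})_k at 0 and at L: parity 1 (even) means the odd
    derivatives vanish, parity -1 (odd) means the even ones vanish, so that
    N = (1,1), D = (-1,-1), M1 = (1,-1), M2 = (-1,1).  An eigenfunction on
    [0,T] with parity s at T extends by the even/odd reflection with sign s to
    an eigenfunction on [0,2T] of the operator with reflected coefficients;
    conversely the symmetric and antisymmetric parts about T of an
    eigenfunction on [0,2T] solve the equation on [0,T] with parity 1 resp. -1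
    at T, and one of them is nontrivial.  Bookkeeping of the boundary values
    at 0 and 2T then gives the four doubling identities, the identity on
    [0,4T] is two doublings, and reflection t |-> T - t swaps the parities at
    0 and T, exchanging M1 and M2 for the operator with coefficients
    (-1)^k a_k(T - t). *)

Lemma null_sub (S S' : R -> Prop) :
  (forall t, S t -> S' t) -> null S' -> null S.
Proof.
  intros Hsub HS' eps Heps.
  destruct (HS' eps Heps) as (a & b & [Hab Hcov] & Hsum).
  exists a, b. split; [split|]; auto.
Qed.

Lemma null_reflect (S : R -> Prop) (c : R) : null S -> null (fun t => S (c - t)).
Proof.
  intros HS eps Heps. destruct (HS eps Heps) as (a & b & [Hab Hcov] & Hsum).
  exists (fun i => c - b i), (fun i => c - a i). split; [split|].
  - intros i. specialize (Hab i). lra.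
  - intros t Ht. destruct (Hcov _ Ht) as [i Hi]. exists i. lra.
  - intros N. rewrite (sum_eq _ (fun i => b i - a i)); auto. intros; ring.
Qed.

Lemma null_point (p : R) : null (fun t => t = p).
Proof.
  intros eps Heps.
  set (b := fun i : nat => match i with O => p + eps / 4 | _ => p - eps / 4 end).
  exists (fun _ => p - eps / 4), b. split; [split|].
  - intros [|i]; unfold b; lra.
  - intros t Ht. exists O. unfold b. lra.
  - assert (Hsum : forall N, sum_f_R0 (fun i => b i - (p - eps / 4)) N = eps / 2).
    { induction N as [|N IH]; simpl; [unfold b; lra|]. rewrite IH. unfold b. lra. }
    intros N. rewrite Hsum. lra.
Qed.

(** Merging two countable families into one: even indices from [f], odd ones
    from [g]; needed to cover a union of two null sets. *)
Definition interleave (f g : nat -> R) (i : nat) : R :=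
  if Nat.even i then f (Nat.div2 i) else g (Nat.div2 i).

Lemma interleave_even f g m : interleave f g (2 * m) = f m.
Proof. unfold interleave. rewrite Nat.even_even, Nat.div2_double. reflexivity. Qed.

Lemma interleave_odd f g m : interleave f g (S (2 * m)) = g m.
Proof. unfold interleave. rewrite Nat.even_succ, Nat.odd_even, Nat.div2_succ_double. reflexivity. Qed.

Lemma sum_interleave f g M :
  sum_f_R0 (interleave f g) (S (2 * M)) = sum_f_R0 f M + sum_f_R0 g M.
Proof.
  induction M as [|M IH].
  - simpl. rewrite <- (interleave_even f g 0), <- (interleave_odd f g 0). simpl. ring.
  - replace (S (2 * S M)) with (S (S (S (2 * M)))) by lia.
    change (sum_f_R0 (interleave f g) (S (S (S (2 * M))))) with
      (sum_f_R0 (interleave f g) (S (2 * M)) + interleave f g (S (S (2 * M)))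
       + interleave f g (S (S (S (2 * M))))).
    replace (S (S (2 * M))) with (2 * S M)%nat by lia.
    rewrite IH, interleave_even, interleave_odd. simpl. ring.
Qed.

Lemma sum_f_R0_mono (c : nat -> R) (N M : nat) :
  (forall i, 0 <= c i) -> (N <= M)%nat -> sum_f_R0 c N <= sum_f_R0 c M.
Proof.
  intros Hc HNM. induction HNM as [|M HNM IH]; [lra|]. simpl. specialize (Hc (S M)). lra.
Qed.

Lemma null_union (S1 S2 : R -> Prop) :
  null S1 -> null S2 -> null (fun t => S1 t \/ S2 t).
Proof.
  intros HS1 HS2 eps Heps.
  destruct (HS1 (eps / 2)) as (a1 & b1 & [Hab1 Hcov1] & Hsum1); [lra|].
  destruct (HS2 (eps / 2)) as (a2 & b2 & [Hab2 Hcov2] & Hsum2); [lra|].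
  assert (Hlen : forall i, 0 <= interleave b1 b2 i - interleave a1 a2 i).
  { intros i. unfold interleave. destruct (Nat.even i);
      [specialize (Hab1 (Nat.div2 i)) | specialize (Hab2 (Nat.div2 i))]; lra. }
  exists (interleave a1 a2), (interleave b1 b2). split; [split|].
  - intros i. specialize (Hlen i). lra.
  - intros t [Ht|Ht].
    + destruct (Hcov1 _ Ht) as [i Hi]. exists (2 * i)%nat. rewrite !interleave_even. exact Hi.
    + destruct (Hcov2 _ Ht) as [i Hi]. exists (S (2 * i)). rewrite !interleave_odd. exact Hi.
  - intros N.
    apply Rle_trans with
      (sum_f_R0 (fun i => interleave b1 b2 i - interleave a1 a2 i) (S (2 * N))).
    { apply sum_f_R0_mono; [exact Hlen | lia]. }
    rewrite (sum_eq _ (interleave (fun i => b1 i - a1 i) (fun i => b2 i - a2 i))).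
    + rewrite sum_interleave. specialize (Hsum1 N). specialize (Hsum2 N). lra.
    + intros i _. unfold interleave. destruct (Nat.even i); reflexivity.
Qed.

Lemma ae_of_null L (P S : R -> Prop) :
  null S -> (forall t, Icc L t -> ~ P t -> S t) -> ae L P.
Proof.
  intros HS Hexc. apply (null_sub _ S); auto. intros t [Ht HnP]. auto.
Qed.
Definition deriv_on (P : R -> Prop) (L : R) (f : R -> R) (t l : R) : Prop :=
  forall eps, 0 < eps -> exists delta, 0 < delta /\
    forall h, h <> 0 -> Rabs h < delta -> Icc L (t + h) -> P h ->
      Rabs ((f (t + h) - f t) / h - l) < eps.

Lemma deriv_on_all L f t l : deriv_on (fun _ => True) L f t l -> deriv_in L f t l.
Proof. intros H eps Heps. destruct (H eps Heps) as (d & Hd & Hf). exists d; auto. Qed.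

Lemma deriv_of_sides L f t l :
  deriv_on (fun h => h < 0) L f t l -> deriv_on (fun h => 0 < h) L f t l ->
  deriv_in L f t l.
Proof.
  intros Hl Hr eps Heps.
  destruct (Hl eps Heps) as (d1 & Hd1 & H1). destruct (Hr eps Heps) as (d2 & Hd2 & H2).
  exists (Rmin d1 d2). split; [apply Rmin_glb_lt; auto|].
  intros h Hh Hsmall Hin.
  pose proof (Rmin_l d1 d2). pose proof (Rmin_r d1 d2).
  destruct (Rlt_or_le h 0); [apply H1 | apply H2]; auto; lra.
Qed.

Lemma deriv_local_affine L1 L2 (f g : R -> R) t1 t2 l sg c d0 (P : R -> Prop) :
  deriv_in L1 f t1 l -> (sg = 1 \/ sg = -1) -> 0 < d0 ->
  (forall h, h <> 0 -> Rabs h < d0 -> Icc L2 (t2 + h) -> P h ->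
     Icc L1 (t1 + sg * h) /\ g (t2 + h) - g t2 = c * (f (t1 + sg * h) - f t1)) ->
  deriv_on P L2 g t2 (c * sg * l).
Proof.
  intros Hf Hsg Hd0 Hincr eps Heps.
  assert (Hc : 0 < Rabs c + 1) by (pose proof (Rabs_pos c); lra).
  destruct (Hf (eps / (Rabs c + 1))) as (d & Hd & Hf'); [apply Rdiv_lt_0_compat; auto|].
  exists (Rmin d0 d). split; [apply Rmin_glb_lt; auto|].
  intros h Hh Hsmall Hin HP.
  pose proof (Rmin_l d0 d). pose proof (Rmin_r d0 d).
  destruct (Hincr h Hh ltac:(lra) Hin HP) as [Hin1 ->].
  assert (Habs : Rabs (sg * h) = Rabs h /\ Rabs (c * sg) = Rabs c).
  { destruct Hsg as [-> | ->]; [rewrite !Rmult_1_l, Rmult_1_r; auto|].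
    replace (-1 * h) with (- h) by ring. replace (c * -1) with (- c) by ring.
    rewrite !Rabs_Ropp. auto. }
  destruct Habs as [Hsh Hcs].
  assert (Hsh0 : sg * h <> 0) by (destruct Hsg as [-> | ->]; lra).
  specialize (Hf' (sg * h) Hsh0 ltac:(rewrite Hsh; lra) Hin1).
  replace (c * (f (t1 + sg * h) - f t1) / h - c * sg * l) with
    ((c * sg) * ((f (t1 + sg * h) - f t1) / (sg * h) - l))
    by (destruct Hsg as [-> | ->]; field; auto).
  rewrite Rabs_mult, Hcs.
  apply Rle_lt_trans with (Rabs c * (eps / (Rabs c + 1))).
  - apply Rmult_le_compat_l; [apply Rabs_pos | lra].
  - apply Rlt_le_trans with ((Rabs c + 1) * (eps / (Rabs c + 1))).
    + apply Rmult_lt_compat_r; [apply Rdiv_lt_0_compat|]; lra.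
    + right. field. lra.
Qed.

Lemma deriv_add L f g t l1 l2 :
  deriv_in L f t l1 -> deriv_in L g t l2 -> deriv_in L (fun x => f x + g x) t (l1 + l2).
Proof.
  intros H1 H2 eps Heps.
  destruct (H1 (eps / 2)) as (d1 & Hd1 & H1'); [lra|].
  destruct (H2 (eps / 2)) as (d2 & Hd2 & H2'); [lra|].
  exists (Rmin d1 d2). split; [apply Rmin_glb_lt; auto|].
  intros h Hh Hsmall Hin. pose proof (Rmin_l d1 d2). pose proof (Rmin_r d1 d2).
  specialize (H1' h Hh ltac:(lra) Hin). specialize (H2' h Hh ltac:(lra) Hin).
  replace ((f (t + h) + g (t + h) - (f t + g t)) / h - (l1 + l2)) with
    (((f (t + h) - f t) / h - l1) + ((g (t + h) - g t) / h - l2)) by (field; auto).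
  apply Rle_lt_trans with (1 := Rabs_triang _ _). lra.
Qed.

Lemma deriv_scal L f t l c : deriv_in L f t l -> deriv_in L (fun x => c * f x) t (c * l).
Proof.
  intros Hf. replace (c * l) with (c * 1 * l) by ring. apply deriv_on_all.
  apply (deriv_local_affine L L f _ t t l 1 c 1); auto; try lra.
  intros h _ _ Hin _. rewrite Rmult_1_l. split; [exact Hin | ring].
Qed.

Lemma deriv_restrict L L' f t l :
  0 <= L <= L' -> deriv_in L' f t l -> deriv_in L f t l.
Proof.
  intros HL Hf eps Heps. destruct (Hf eps Heps) as (d & Hd & Hf'). exists d. split; auto.
  intros h Hh Hsmall Hin. apply Hf'; auto. unfold Icc in *. lra.
Qed.

Lemma deriv_reflect L f t l :
  Icc L t -> deriv_in L f (L - t) l -> deriv_in L (fun x => f (L - x)) t (- l).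
Proof.
  intros Ht Hf. replace (- l) with (1 * -1 * l) by ring. apply deriv_on_all.
  apply (deriv_local_affine L L f _ (L - t) t l (-1) 1 1); auto; try lra.
  intros h _ _ Hin _. unfold Icc in *. split; [lra|].
  replace (L - (t + h)) with (L - t + -1 * h) by ring. ring.
Qed.

Lemma abs_cont_add L f g :
  abs_cont L f -> abs_cont L g -> abs_cont L (fun t => f t + g t).
Proof.
  intros Hf Hg eps Heps.
  destruct (Hf (eps / 2)) as (d1 & Hd1 & Hf'); [lra|].
  destruct (Hg (eps / 2)) as (d2 & Hd2 & Hg'); [lra|].
  exists (Rmin d1 d2). split; [apply Rmin_glb_lt; auto|].
  intros N x y Hxy Hdisj Hsum. pose proof (Rmin_l d1 d2). pose proof (Rmin_r d1 d2).
  specialize (Hf' N x y Hxy Hdisj ltac:(lra)). specialize (Hg' N x y Hxy Hdisj ltac:(lra)).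
  apply Rle_lt_trans with
    (sum_f_R0 (fun i => Rabs (f (y i) - f (x i)) + Rabs (g (y i) - g (x i))) N).
  - apply sum_Rle. intros i _.
    replace (f (y i) + g (y i) - (f (x i) + g (x i))) with
      ((f (y i) - f (x i)) + (g (y i) - g (x i))) by ring.
    apply Rabs_triang.
  - rewrite plus_sum. lra.
Qed.

Lemma abs_cont_scal L f c : abs_cont L f -> abs_cont L (fun t => c * f t).
Proof.
  intros Hf eps Heps.
  assert (Hc : 0 < Rabs c + 1) by (pose proof (Rabs_pos c); lra).
  destruct (Hf (eps / (Rabs c + 1))) as (d & Hd & Hf'); [apply Rdiv_lt_0_compat; lra|].
  exists d. split; auto. intros N x y Hxy Hdisj Hsum.
  specialize (Hf' N x y Hxy Hdisj Hsum).
  rewrite (sum_eq _ (fun i => Rabs (f (y i) - f (x i)) * Rabs c)).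
  2:{ intros i _. rewrite <- Rabs_mult. f_equal. ring. }
  rewrite <- scal_sum.
  assert (0 <= sum_f_R0 (fun i => Rabs (f (y i) - f (x i))) N)
    by (apply cond_pos_sum; intros; apply Rabs_pos).
  apply Rle_lt_trans with ((Rabs c + 1) * sum_f_R0 (fun i => Rabs (f (y i) - f (x i))) N).
  - apply Rmult_le_compat_r; lra.
  - apply Rlt_le_trans with ((Rabs c + 1) * (eps / (Rabs c + 1))).
    + apply Rmult_lt_compat_l; lra.
    + right. field. lra.
Qed.

Lemma abs_cont_shift L f g k :
  abs_cont L f -> (forall t, Icc L t -> g t = f t + k) -> abs_cont L g.
Proof.
  intros Hf Hgf eps Heps. destruct (Hf eps Heps) as (d & Hd & Hf').
  exists d. split; auto. intros N x y Hxy Hdisj Hsum.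
  rewrite (sum_eq _ (fun i => Rabs (f (y i) - f (x i)))).
  - apply Hf'; auto.
  - intros i Hi. destruct (Hxy i Hi) as (Hx & Hxy' & Hy).
    rewrite !Hgf by (unfold Icc; lra). f_equal. ring.
Qed.

Lemma abs_cont_reflect L f : abs_cont L f -> abs_cont L (fun t => f (L - t)).
Proof.
  intros Hf eps Heps. destruct (Hf eps Heps) as (d & Hd & Hf').
  exists d. split; auto. intros N x y Hxy Hdisj Hsum.
  rewrite (sum_eq _ (fun i => Rabs (f (L - x i) - f (L - y i)))).
  - apply (Hf' N (fun i => L - y i) (fun i => L - x i)).
    + intros i Hi. specialize (Hxy i Hi). lra.
    + intros i j Hi Hj Hij. destruct (Hdisj i j Hi Hj Hij); lra.
    + rewrite (sum_eq _ (fun i => y i - x i)); auto. intros; ring.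
  - intros i _. rewrite <- Rabs_Ropp. f_equal. ring.
Qed.

Lemma abs_cont_comp_mono L1 L2 f (phi : R -> R) :
  (forall t, Icc L2 t -> Icc L1 (phi t)) ->
  (forall x y, 0 <= x <= y -> y <= L2 -> phi x <= phi y /\ phi y - phi x <= y - x) ->
  abs_cont L1 f -> abs_cont L2 (fun t => f (phi t)).
Proof.
  intros Hrange Hmono Hf eps Heps. destruct (Hf eps Heps) as (d & Hd & Hf').
  exists d. split; auto. intros N x y Hxy Hdisj Hsum.
  apply (Hf' N (fun i => phi (x i)) (fun i => phi (y i))).
  - intros i Hi. destruct (Hxy i Hi) as (Hx & Hxy' & Hy).
    destruct (Hrange (x i)) as [Hpx _]; [unfold Icc; lra|].
    destruct (Hrange (y i)) as [_ Hpy]; [unfold Icc; lra|].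
    destruct (Hmono (x i) (y i)) as [Hle _]; [lra | lra |]. lra.
  - intros i j Hi Hj Hij. pose proof (Hxy i Hi). pose proof (Hxy j Hj).
    destruct (Hdisj i j Hi Hj Hij); [left | right]; apply Hmono; lra.
  - apply Rle_lt_trans with (2 := Hsum). apply sum_Rle. intros i Hi.
    destruct (Hxy i Hi) as (Hx & Hxy' & Hy). apply Hmono; lra.
Qed.

(** Gluing: the function equal to f on [0,T] and to c * f(2T - t) on
    [T,2T].  With |c| = 1 this is the even (c = 1) or odd (c = -1)
    reflection of f about T. *)
Definition glueF (T c : R) (f : R -> R) (t : R) : R :=
  if Rle_dec t T then f t else c * f (2 * T - t).

Lemma glueF_le T c f t : t <= T -> glueF T c f t = f t.
Proof. intros Ht. unfold glueF. destruct (Rle_dec t T); [reflexivity | lra]. Qed.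

Lemma glueF_gt T c f t : T < t -> glueF T c f t = c * f (2 * T - t).
Proof. intros Ht. unfold glueF. destruct (Rle_dec t T); [lra | reflexivity]. Qed.

Lemma deriv_glue_left T c f t l :
  0 <= t < T -> deriv_in T f t l -> deriv_in (2 * T) (glueF T c f) t l.
Proof.
  intros Ht Hf. replace l with (1 * 1 * l) by ring. apply deriv_on_all.
  apply (deriv_local_affine T (2 * T) f _ t t l 1 1 (T - t)); auto; try lra.
  intros h _ Hsmall Hin _. rewrite Rmult_1_l.
  pose proof (Rle_abs h). unfold Icc in *.
  rewrite !glueF_le by lra. split; [lra | ring].
Qed.

Lemma deriv_glue_right T c f t l :
  T < t <= 2 * T -> deriv_in T f (2 * T - t) l ->
  deriv_in (2 * T) (glueF T c f) t (- c * l).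
Proof.
  intros Ht Hf. replace (- c * l) with (c * -1 * l) by ring. apply deriv_on_all.
  apply (deriv_local_affine T (2 * T) f _ (2 * T - t) t l (-1) c (t - T)); auto; try lra.
  intros h _ Hsmall Hin _.
  pose proof (Rle_abs (- h)). rewrite Rabs_Ropp in *. unfold Icc in *.
  rewrite !glueF_gt by lra. split; [lra|].
  replace (2 * T - (t + h)) with (2 * T - t + -1 * h) by ring. ring.
Qed.

(** At the junction the one-sided derivatives l and -c*l must agree. *)
Lemma deriv_glue_mid T c f l :
  0 < T -> deriv_in T f T l -> c * f T = f T -> - c * l = l ->
  deriv_in (2 * T) (glueF T c f) T l.
Proof.
  intros HT Hf Hcont Hl. apply deriv_of_sides.
  - replace l with (1 * 1 * l) by ring.
    apply (deriv_local_affine T (2 * T) f _ T T l 1 1 1); auto; try lra.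
    intros h _ _ Hin Hneg. unfold Icc in *. rewrite Rmult_1_l, !glueF_le by lra.
    split; [lra | ring].
  - rewrite <- Hl. replace (- c * l) with (c * -1 * l) by ring.
    apply (deriv_local_affine T (2 * T) f _ T T l (-1) c 1); auto; try lra.
    intros h _ _ Hin Hpos. unfold Icc in *.
    rewrite glueF_gt, glueF_le by lra. split; [lra|].
    replace (2 * T - (T + h)) with (T + -1 * h) by ring. rewrite Rmult_minus_distr_l, Hcont. reflexivity.
Qed.

Lemma deriv_glue T c f f' t :
  0 < T -> Icc (2 * T) t -> (forall x, Icc T x -> deriv_in T f x (f' x)) ->
  c * f T = f T -> - c * f' T = f' T ->
  deriv_in (2 * T) (glueF T c f) t (glueF T (- c) f' t).
Proof.
  intros HT Ht Hf Hcont Hcont'. unfold Icc in Ht.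
  destruct (Rtotal_order t T) as [Hlt | [-> | Hgt]].
  - rewrite glueF_le by lra. apply deriv_glue_left; [lra|]. apply Hf. unfold Icc; lra.
  - rewrite glueF_le by lra. apply deriv_glue_mid; auto. apply Hf. unfold Icc; lra.
  - rewrite glueF_gt by lra. apply deriv_glue_right; [lra|]. apply Hf. unfold Icc; lra.
Qed.

(** On [0,2T] the glued function equals
      f (min t T) + c * f (T - (max t T - T)) - f T,
    a combination of compositions of f with monotone contractions. *)
Lemma abs_cont_glue T c f :
  0 < T -> c * f T = f T -> abs_cont T f -> abs_cont (2 * T) (glueF T c f).
Proof.
  intros HT Hcont Hf.
  apply (abs_cont_shift _
    (fun t => f (Rmin t T) + c * (fun x => f (T - x)) (Rmax t T - T)) _ (- f T)).
  - apply abs_cont_add; [|apply abs_cont_scal].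
    + apply (abs_cont_comp_mono T (2 * T) f (fun t => Rmin t T)); auto.
      * intros t Ht. unfold Icc in *. unfold Rmin. destruct (Rle_dec t T); lra.
      * intros x y Hxy Hy. unfold Rmin.
        destruct (Rle_dec x T), (Rle_dec y T); lra.
    + apply (abs_cont_comp_mono T (2 * T) (fun x => f (T - x)) (fun t => Rmax t T - T)).
      * intros t Ht. unfold Icc in *. unfold Rmax. destruct (Rle_dec t T); lra.
      * intros x y Hxy Hy. unfold Rmax.
        destruct (Rle_dec x T), (Rle_dec y T); lra.
      * apply abs_cont_reflect; auto.
  - intros t Ht. unfold Rmin, Rmax. destruct (Rle_dec t T).
    + rewrite glueF_le by lra. replace (T - (T - T)) with T by ring. lra.
    + rewrite glueF_gt by lra. replace (T - (t - T)) with (2 * T - t) by ring. ring.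
Qed.

Lemma sign_sq (k : nat) : (-1) ^ k * (-1) ^ k = 1.
Proof. rewrite <- Rpow_mult_distr. replace (-1 * -1) with 1 by ring. apply pow1. Qed.

Section Solutions.
Variable n : nat.
Hypothesis n_pos : (1 <= n)%nat.

Lemma sign_top : (-1) ^ (2 * n - 1) = -1.
Proof. replace (2 * n - 1)%nat with (S (2 * (n - 1))) by lia. apply pow_1_odd. Qed.

Definition odeP (L : R) (b : nat -> R -> R) (lam : R) (u : R -> R)
    (D : nat -> R -> R) (t : R) : Prop :=
  exists l, deriv_in L (D (2 * n - 1)%nat) t l /\
    l + sum_f_R0 (fun k => b k t * D k t) (2 * n - 1) + lam * u t = 0.

Definition sol (L : R) (b : nat -> R -> R) (lam : R) (u : R -> R)
    (D : nat -> R -> R) : Prop :=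
  W2n1 n L u D /\ ae L (odeP L b lam u D).

Lemma eigenvalue_sol L b BC lam : eigenvalue n L b BC lam <->
  exists u D, sol L b lam u D /\ BC n L D /\ exists t, Icc L t /\ u t <> 0.
Proof. unfold eigenvalue, sol, odeP. firstorder. Qed.

Lemma sol_restrict L L' b b' lam u D :
  0 <= L <= L' -> sol L' b' lam u D -> (forall k t, Icc L t -> b' k t = b k t) ->
  sol L b lam u D.
Proof.
  intros HL [[Hu0 [Hder Hac]] Hae] Hb.
  assert (Hin : forall t, Icc L t -> Icc L' t) by (unfold Icc; intros; lra).
  split; [split; [|split]|].
  - intros t Ht. auto.
  - intros k t Hk Ht. apply (deriv_restrict L L'); auto.
  - apply (abs_cont_comp_mono L' L _ (fun t => t)); auto. intros; lra.
  - apply (ae_of_null _ _ _ Hae). intros t Ht Hode. split; auto.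
    intros [l [Hl Heq]]. apply Hode. exists l. split.
    + apply (deriv_restrict L L'); auto.
    + rewrite <- Heq. f_equal. f_equal. apply sum_eq. intros k _. rewrite Hb; auto.
Qed.

Lemma sol_coef_ae L b b' lam u D p :
  sol L b lam u D -> (forall k t, Icc L t -> t <> p -> b k t = b' k t) ->
  sol L b' lam u D.
Proof.
  intros [HW Hae] Hb. split; auto.
  apply (ae_of_null _ _ _ (null_union _ _ Hae (null_point p))). intros t Ht Hode.
  destruct (Req_dec t p) as [Htp | Htp]; [right; exact Htp | left]. split; auto.
  intros [l [Hl Heq]]. apply Hode. exists l. split; auto.
  rewrite <- Heq. f_equal. f_equal. apply sum_eq. intros k _. rewrite Hb; auto.
Qed.

Lemma sol_comb L b lam u1 D1 u2 D2 s :
  sol L b lam u1 D1 -> sol L b lam u2 D2 ->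
  sol L b lam (fun t => u1 t + s * u2 t) (fun k t => D1 k t + s * D2 k t).
Proof.
  intros [[Hu1 [Hder1 Hac1]] Hae1] [[Hu2 [Hder2 Hac2]] Hae2].
  split; [split; [|split]|].
  - intros t Ht. rewrite Hu1, Hu2; auto.
  - intros k t Hk Ht. apply deriv_add; [|apply deriv_scal]; auto.
  - apply abs_cont_add; [|apply abs_cont_scal]; auto.
  - apply (ae_of_null _ _ _ (null_union _ _ Hae1 Hae2)). intros t Ht Hode.
    destruct (classic (odeP L b lam u1 D1 t)) as [[l1 [Hl1 Heq1]] | H1];
      [| left; auto].
    destruct (classic (odeP L b lam u2 D2 t)) as [[l2 [Hl2 Heq2]] | H2];
      [| right; auto].
    exfalso. apply Hode. exists (l1 + s * l2). split.
    + apply deriv_add; [|apply deriv_scal]; auto.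
    + rewrite (sum_eq _ (fun k => b k t * D1 k t + b k t * D2 k t * s)) by (intros; ring).
      rewrite plus_sum, <- scal_sum.
      replace 0 with (0 + s * 0) by ring. rewrite <- Heq1, <- Heq2 at 1. ring.
Qed.

Lemma sol_reflect L b lam u D :
  0 <= L -> sol L b lam u D ->
  sol L (checkc L b) lam (fun t => u (L - t)) (fun k t => (-1) ^ k * D k (L - t)).
Proof.
  intros HL [[Hu0 [Hder Hac]] Hae].
  assert (Hin : forall t, Icc L t -> Icc L (L - t)) by (unfold Icc; intros; lra).
  split; [split; [|split]|].
  - intros t Ht. simpl. rewrite Hu0; auto. ring.
  - intros k t Hk Ht.
    replace ((-1) ^ S k * D (S k) (L - t)) with ((-1) ^ k * - D (S k) (L - t))
      by (simpl; ring).
    apply deriv_scal, deriv_reflect; auto.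
  - apply abs_cont_scal, abs_cont_reflect; auto.
  - apply (ae_of_null _ _ _ (null_reflect _ L Hae)). intros t Ht Hode.
    split; auto. intros [l [Hl Heq]]. apply Hode. exists ((-1) ^ (2 * n - 1) * - l). split.
    + apply deriv_scal, deriv_reflect; auto.
    + rewrite <- Heq, sign_top. f_equal. f_equal.
      * ring.
      * apply sum_eq. intros k _. unfold checkc.
        replace ((-1) ^ k * b k (L - t) * ((-1) ^ k * D k (L - t))) with
          (((-1) ^ k * (-1) ^ k) * (b k (L - t) * D k (L - t))) by ring.
        rewrite sign_sq. ring.
Qed.

(** The
    operator on [0,2T] has the reflected coefficients [refl T a]; the
    junction condition says that D has parity s at T. *)
Definition glueD (T s : R) (D : nat -> R -> R) (k : nat) : R -> R :=
  glueF T (s * (-1) ^ k) (D k).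

Lemma sol_glue T a lam u D s :
  0 < T -> sol T a lam u D ->
  (forall k, (k < 2 * n)%nat -> s * (-1) ^ k * D k T = D k T) ->
  sol (2 * T) (refl T a) lam (glueF T s u) (glueD T s D).
Proof.
  intros HT [[Hu0 [Hder Hac]] Hae] Hjunct.
  assert (Hleft : forall t, Icc (2 * T) t -> t <= T -> Icc T t) by (unfold Icc; intros; lra).
  assert (Hright : forall t, Icc (2 * T) t -> T < t -> Icc T (2 * T - t))
    by (unfold Icc; intros; lra).
  split; [split; [|split]|].
  - intros t Ht. unfold glueD. destruct (Rle_dec t T).
    + rewrite !glueF_le by lra. apply Hu0, Hleft; auto.
    + rewrite !glueF_gt by lra. rewrite Hu0 by (apply Hright; auto; lra). simpl. ring.
  - intros k t Hk Ht. unfold glueD.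
    replace (s * (-1) ^ S k) with (- (s * (-1) ^ k)) by (simpl; ring).
    apply deriv_glue; auto.
    + apply Hjunct. lia.
    + specialize (Hjunct (S k) ltac:(lia)). simpl in Hjunct. lra.
  - apply abs_cont_glue; auto. apply Hjunct. lia.
  - (* The equation can fail only where it fails for u, at mirror images of
       such points, or at the junction T. *)
    apply (ae_of_null _ _ _
      (null_union _ _ Hae (null_union _ _ (null_reflect _ (2 * T) Hae) (null_point T)))).
    intros t Ht Hode. unfold glueD in Hode.
    destruct (Rtotal_order t T) as [Hlt | [Heq | Hgt]]; [left | right; right; auto | right; left].
    + split; [apply Hleft; auto; lra |].
      intros [l [Hl Heq]]. apply Hode. exists l. split.
      * apply deriv_glue_left; auto. unfold Icc in Ht; lra.
      * rewrite <- Heq, glueF_le by lra. f_equal. f_equal. apply sum_eq. intros k _.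
        unfold refl. destruct (Rle_dec t T); [|lra]. rewrite glueF_le by lra. reflexivity.
    + split; [auto|]. intros [l [Hl Heq]]. apply Hode. exists (s * l). split.
      * replace (s * l) with (- (s * (-1) ^ (2 * n - 1)) * l)
          by (rewrite sign_top; auto; ring).
        apply deriv_glue_right; auto. unfold Icc in Ht; lra.
      * rewrite glueF_gt by lra.
        rewrite (sum_eq _ (fun k => a k (2 * T - t) * D k (2 * T - t) * s)).
        { rewrite <- scal_sum. replace 0 with (s * 0) by ring. rewrite <- Heq. ring. }
        intros k _. unfold refl. destruct (Rle_dec t T); [lra|]. rewrite glueF_gt by lra.
        replace ((-1) ^ k * a k (2 * T - t) * (s * (-1) ^ k * D k (2 * T - t))) with
          (((-1) ^ k * (-1) ^ k) * (a k (2 * T - t) * D k (2 * T - t) * s)) by ring.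
        rewrite sign_sq. ring.
Qed.
End Solutions.

(** Boundary conditions as parities.  [parity n s D x] says that the
    derivatives at x are those of a function even (s = 1) or odd (s = -1)
    about x. *)
Definition parity (n : nat) (s : R) (D : nat -> R -> R) (x : R) : Prop :=
  forall k, (k < 2 * n)%nat -> s * (-1) ^ k * D k x = D k x.

Definition bc_parity (p q : R) (n : nat) (L : R) (D : nat -> R -> R) : Prop :=
  parity n p D 0 /\ parity n q D L.

Lemma parity_even n D x : parity n 1 D x <-> forall j, (j < n)%nat -> D (2 * j + 1)%nat x = 0.
Proof.
  split.
  - intros Hpar j Hj. specialize (Hpar (2 * j + 1)%nat ltac:(lia)).
    replace (2 * j + 1)%nat with (S (2 * j)) in * by lia. rewrite pow_1_odd in Hpar. lra.
  - intros Hodd k Hk. destruct (Nat.Even_or_Odd k) as [[j ->] | [j ->]].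
    + rewrite pow_1_even. ring.
    + rewrite Hodd by lia. ring.
Qed.

Lemma parity_odd n D x : parity n (-1) D x <-> forall j, (j < n)%nat -> D (2 * j)%nat x = 0.
Proof.
  split.
  - intros Hpar j Hj. specialize (Hpar (2 * j)%nat ltac:(lia)).
    rewrite pow_1_even in Hpar. lra.
  - intros Heven k Hk. destruct (Nat.Even_or_Odd k) as [[j ->] | [j ->]].
    + rewrite Heven by lia. ring.
    + replace (2 * j + 1)%nat with (S (2 * j)) by lia. rewrite pow_1_odd. ring.
Qed.

Lemma eigenvalue_bc_iff n L b (BC1 BC2 : nat -> R -> (nat -> R -> R) -> Prop) lam :
  (forall D, BC1 n L D <-> BC2 n L D) ->
  eigenvalue n L b BC1 lam <-> eigenvalue n L b BC2 lam.
Proof.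
  intros HBC. unfold eigenvalue.
  split; intros (u & D & HW & Hbc & Hrest); exists u, D; firstorder.
Qed.

Lemma eigenvalue_N n L b lam :
  eigenvalue n L b bcN lam <-> eigenvalue n L b (bc_parity 1 1) lam.
Proof.
  apply eigenvalue_bc_iff. intros D. unfold bc_parity. rewrite !parity_even. firstorder.
Qed.

Lemma eigenvalue_D n L b lam :
  eigenvalue n L b bcD lam <-> eigenvalue n L b (bc_parity (-1) (-1)) lam.
Proof.
  apply eigenvalue_bc_iff. intros D. unfold bc_parity. rewrite !parity_odd. firstorder.
Qed.

Lemma eigenvalue_M1 n L b lam :
  eigenvalue n L b bcM1 lam <-> eigenvalue n L b (bc_parity 1 (-1)) lam.
Proof.
  apply eigenvalue_bc_iff. intros D. unfold bc_parity.
  rewrite parity_even, parity_odd. firstorder.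
Qed.

Lemma eigenvalue_M2 n L b lam :
  eigenvalue n L b bcM2 lam <-> eigenvalue n L b (bc_parity (-1) 1) lam.
Proof.
  apply eigenvalue_bc_iff. intros D. unfold bc_parity.
  rewrite parity_even, parity_odd. firstorder.
Qed.

Lemma unit_sign_sq (s : R) (k : nat) :
  (s = 1 \/ s = -1) -> s * (-1) ^ k * (s * (-1) ^ k) = 1.
Proof.
  intros Hs. replace (s * (-1) ^ k * (s * (-1) ^ k)) with (s * s * ((-1) ^ k * (-1) ^ k))
    by ring.
  rewrite sign_sq. destruct Hs as [-> | ->]; ring.
Qed.

Lemma sign_swap (e x y : R) : e * e = 1 -> e * (x + e * y) = y + e * x.
Proof. intros He. transitivity (e * x + e * e * y); [ring | rewrite He; ring]. Qed.

Lemma glueD_0 T s D k : 0 < T -> glueD T s D k 0 = D k 0.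
Proof. intros HT. unfold glueD. apply glueF_le. lra. Qed.

Lemma glueD_2T T s D k : 0 < T -> glueD T s D k (2 * T) = s * (-1) ^ k * D k 0.
Proof. intros HT. unfold glueD. rewrite glueF_gt by lra. do 2 f_equal. ring. Qed.

Lemma glue_bcP n T s D : 0 < T -> parity n s D 0 -> bcP n (2 * T) (glueD T s D).
Proof.
  intros HT Hpar k Hk. rewrite glueD_0, glueD_2T by auto. symmetry. auto.
Qed.

Lemma glue_bcA n T s D : 0 < T -> parity n (- s) D 0 -> bcA n (2 * T) (glueD T s D).
Proof.
  intros HT Hpar k Hk. rewrite glueD_0, glueD_2T by auto.
  rewrite <- (Hpar k Hk) at 1. ring.
Qed.

Lemma glue_bc_same n T p s D :
  0 < T -> parity n p D 0 -> bc_parity p p n (2 * T) (glueD T s D).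
Proof.
  intros HT Hpar. split; intros k Hk.
  - rewrite !glueD_0 by auto. auto.
  - rewrite !glueD_2T by auto. rewrite <- (Hpar k Hk) at 2. ring.
Qed.

(** Symmetric (s = 1) and antisymmetric (s = -1) parts about T of a function
    on [0,2T], expressed on the derivatives. *)
Definition symD (T s : R) (D : nat -> R -> R) (k : nat) (t : R) : R :=
  D k t + s * ((-1) ^ k * D k (2 * T - t)).

Lemma symD_0 T s D k : symD T s D k 0 = D k 0 + s * (-1) ^ k * D k (2 * T).
Proof. unfold symD. rewrite Rminus_0_r. ring. Qed.

Lemma symD_parity_T n T s D : (s = 1 \/ s = -1) -> parity n s (symD T s D) T.
Proof.
  intros Hs k Hk. unfold symD. replace (2 * T - T) with T by ring.
  rewrite <- Rmult_assoc, sign_swap by (apply unit_sign_sq; auto). ring.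
Qed.

Lemma split_bcP n T s D :
  (s = 1 \/ s = -1) -> bcP n (2 * T) D -> parity n s (symD T s D) 0.
Proof.
  intros Hs HP k Hk. rewrite symD_0, <- (HP k Hk), sign_swap by (apply unit_sign_sq; auto).
  ring.
Qed.

Lemma split_bcA n T s D :
  (s = 1 \/ s = -1) -> bcA n (2 * T) D -> parity n (- s) (symD T s D) 0.
Proof.
  intros Hs HA k Hk. rewrite symD_0.
  replace (D k (2 * T)) with (- D k 0) by (rewrite (HA k Hk); ring).
  replace (- s * (-1) ^ k) with (- (s * (-1) ^ k)) by ring.
  rewrite Ropp_mult_distr_l_reverse, sign_swap by (apply unit_sign_sq; auto). ring.
Qed.

Lemma split_bc_same n T p s D :
  bc_parity p p n (2 * T) D -> parity n p (symD T s D) 0.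
Proof.
  intros [H0 H2T] k Hk. rewrite symD_0.
  transitivity (p * (-1) ^ k * D k 0 + s * (-1) ^ k * (p * (-1) ^ k * D k (2 * T)));
    [ring | rewrite H0, H2T; auto].
Qed.

Lemma checkc_refl T a k t :
  Icc (2 * T) t -> t <> T -> checkc (2 * T) (refl T a) k t = refl T a k t.
Proof.
  intros Ht HtT. unfold checkc, refl, Icc in *.
  destruct (Rle_dec (2 * T - t) T), (Rle_dec t T); try lra.
  replace (2 * T - (2 * T - t)) with t by ring. rewrite <- Rmult_assoc, sign_sq. ring.
Qed.

Lemma checkc_invol T b : checkc T (checkc T b) = b.
Proof.
  apply functional_extensionality. intros k. apply functional_extensionality. intros t.
  unfold checkc. replace (T - (T - t)) with t by ring. rewrite <- Rmult_assoc, sign_sq. ring.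
Qed.

Lemma parity_reflect n q D L x :
  parity n q D (L - x) -> parity n q (fun k t => (-1) ^ k * D k (L - t)) x.
Proof.
  intros Hpar k Hk. rewrite <- (Hpar k Hk) at 2. ring.
Qed.

Section Spectra.
Variable n : nat.
Hypothesis n_pos : (1 <= n)%nat.

Lemma glue_eigenvalue T a lam p s BC :
  0 < T -> eigenvalue n T a (bc_parity p s) lam ->
  (forall D, parity n p D 0 -> BC n (2 * T) (glueD T s D)) ->
  eigenvalue n (2 * T) (refl T a) BC lam.
Proof.
  intros HT Heig HBC. apply eigenvalue_sol in Heig.
  destruct Heig as (u & D & Hsol & [Hpar0 HparT] & t0 & Ht0 & Hu).
  apply eigenvalue_sol. exists (glueF T s u), (glueD T s D).
  split; [apply sol_glue; auto|]. split; [auto|].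
  exists t0. unfold Icc in *. split; [lra|]. rewrite glueF_le; [exact Hu | lra].
Qed.

Lemma split_eigenvalue T a lam (p : R -> R) BC :
  0 < T -> eigenvalue n (2 * T) (refl T a) BC lam ->
  (forall s D, (s = 1 \/ s = -1) -> BC n (2 * T) D -> parity n (p s) (symD T s D) 0) ->
  eigenvalue n T a (bc_parity (p 1) 1) lam \/ eigenvalue n T a (bc_parity (p (-1)) (-1)) lam.
Proof.
  intros HT Heig HBC. apply eigenvalue_sol in Heig.
  destruct Heig as (u & D & Hsol & Hbc & t0 & Ht0 & Hu).
  assert (Hrefl : sol n (2 * T) (refl T a) lam (fun t => u (2 * T - t))
                    (fun k t => (-1) ^ k * D k (2 * T - t))).
  { apply (sol_coef_ae _ _ (checkc (2 * T) (refl T a)) _ _ _ _ T).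
    - apply sol_reflect; auto. lra.
    - intros k t Ht HtT. apply checkc_refl; auto. }
  assert (Hsym : forall s, sol n T a lam (fun t => u t + s * u (2 * T - t)) (symD T s D)).
  { intros s. apply (sol_restrict _ _ (2 * T) _ (refl T a)); [lra | apply sol_comb; auto |].
    intros k t Ht. unfold refl, Icc in *. destruct (Rle_dec t T); [reflexivity | lra]. }
  assert (Hnontriv : forall s, (s = 1 \/ s = -1) -> u t0 + s * u (2 * T - t0) <> 0 ->
                       eigenvalue n T a (bc_parity (p s) s) lam).
  { intros s Hs Hne. apply eigenvalue_sol.
    exists (fun t => u t + s * u (2 * T - t)), (symD T s D).
    split; [auto|]. split; [split; [apply HBC | apply symD_parity_T]; auto|].
    unfold Icc in *. destruct (Rle_dec t0 T).
    - exists t0. split; [lra | auto].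
    - exists (2 * T - t0). split; [lra|]. replace (2 * T - (2 * T - t0)) with t0 by ring.
      intros Hzero. apply Hne. destruct Hs as [-> | ->]; lra. }
  destruct (Req_dec (u t0 + 1 * u (2 * T - t0)) 0) as [Hzero | Hne].
  - right. apply Hnontriv; [right; reflexivity | lra].
  - left. apply Hnontriv; [left; reflexivity | exact Hne].
Qed.

Lemma doubling T a lam (p : R -> R) BC :
  0 < T ->
  (forall s D, (s = 1 \/ s = -1) -> parity n (p s) D 0 -> BC n (2 * T) (glueD T s D)) ->
  (forall s D, (s = 1 \/ s = -1) -> BC n (2 * T) D -> parity n (p s) (symD T s D) 0) ->
  (eigenvalue n T a (bc_parity (p 1) 1) lam \/ eigenvalue n T a (bc_parity (p (-1)) (-1)) lam)
  <-> eigenvalue n (2 * T) (refl T a) BC lam.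
Proof.
  intros HT Hglue Hsplit. split.
  - intros [Heig | Heig]; apply (glue_eigenvalue T a lam _ _ BC HT Heig); intros D HD;
      apply Hglue; auto.
  - intros Heig. apply (split_eigenvalue T a lam p BC); auto.
Qed.

Lemma spectrum_periodic T a lam : 0 < T ->
  (eigenvalue n T a bcN lam \/ eigenvalue n T a bcD lam) <->
  eigenvalue n (2 * T) (refl T a) bcP lam.
Proof.
  intros HT. rewrite eigenvalue_N, eigenvalue_D.
  apply (doubling T a lam (fun s => s)); auto.
  - intros s D _ Hpar. apply glue_bcP; auto.
  - intros s D Hs HP. apply split_bcP; auto.
Qed.

Lemma spectrum_neumann T a lam : 0 < T ->
  (eigenvalue n T a bcN lam \/ eigenvalue n T a bcM1 lam) <->
  eigenvalue n (2 * T) (refl T a) bcN lam.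
Proof.
  intros HT. rewrite !eigenvalue_N, eigenvalue_M1.
  apply (doubling T a lam (fun _ => 1)); auto.
  - intros s D _ Hpar. apply glue_bc_same; auto.
  - intros s D _ HN. apply split_bc_same; auto.
Qed.

Lemma spectrum_dirichlet T a lam : 0 < T ->
  (eigenvalue n T a bcD lam \/ eigenvalue n T a bcM2 lam) <->
  eigenvalue n (2 * T) (refl T a) bcD lam.
Proof.
  intros HT. rewrite !eigenvalue_D, eigenvalue_M2, or_comm.
  apply (doubling T a lam (fun _ => -1)); auto.
  - intros s D _ Hpar. apply glue_bc_same; auto.
  - intros s D _ HD. apply split_bc_same; auto.
Qed.

Lemma spectrum_antiperiodic T a lam : 0 < T ->
  (eigenvalue n T a bcM1 lam \/ eigenvalue n T a bcM2 lam) <->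
  eigenvalue n (2 * T) (refl T a) bcA lam.
Proof.
  intros HT. rewrite eigenvalue_M1, eigenvalue_M2, or_comm.
  replace (bc_parity 1 (-1)) with (bc_parity (- -1) (-1)) by (f_equal; ring).
  apply (doubling T a lam (fun s => - s)); auto.
  - intros s D _ Hpar. apply glue_bcA; auto.
  - intros s D Hs HA. apply split_bcA; auto.
Qed.

Lemma reflect_eigenvalue T b lam p q : 0 < T ->
  eigenvalue n T b (bc_parity p q) lam -> eigenvalue n T (checkc T b) (bc_parity q p) lam.
Proof.
  intros HT Heig. apply eigenvalue_sol in Heig.
  destruct Heig as (u & D & Hsol & [Hpar0 HparT] & t0 & Ht0 & Hu).
  apply eigenvalue_sol. exists (fun t => u (T - t)), (fun k t => (-1) ^ k * D k (T - t)).
  split; [apply sol_reflect; auto; lra|]. split.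
  - split; apply parity_reflect; [rewrite Rminus_0_r | replace (T - T) with 0 by ring]; auto.
  - exists (T - t0). unfold Icc in *. split; [lra|]. replace (T - (T - t0)) with t0 by ring. auto.
Qed.

Lemma spectrum_check T a lam p q : 0 < T ->
  eigenvalue n T a (bc_parity p q) lam <-> eigenvalue n T (checkc T a) (bc_parity q p) lam.
Proof.
  intros HT. split; [apply reflect_eigenvalue; auto|].
  intros Heig. rewrite <- (checkc_invol T a). apply reflect_eigenvalue; auto.
Qed.
End Spectra.

Theorem mainTheorem6 (n : nat) (T alpha : R) (a : nat -> R -> R) :
  (1 <= n)%nat -> 0 < T -> 1 <= alpha ->
  (forall k, (k < 2 * n)%nat -> Lp T alpha (a k)) ->
  (forall lam, (eigenvalue n T a bcN lam \/ eigenvalue n T a bcD lam) <->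
               eigenvalue n (2 * T) (refl T a) bcP lam) /\
  (forall lam, (eigenvalue n T a bcN lam \/ eigenvalue n T a bcM1 lam) <->
               eigenvalue n (2 * T) (refl T a) bcN lam) /\
  (forall lam, (eigenvalue n T a bcD lam \/ eigenvalue n T a bcM2 lam) <->
               eigenvalue n (2 * T) (refl T a) bcD lam) /\
  (forall lam, (eigenvalue n T a bcM1 lam \/ eigenvalue n T a bcM2 lam) <->
               eigenvalue n (2 * T) (refl T a) bcA lam) /\
  (forall lam, (eigenvalue n T a bcN lam \/ eigenvalue n T a bcD lam \/
                eigenvalue n T a bcM1 lam \/ eigenvalue n T a bcM2 lam) <->
               eigenvalue n (4 * T) (refl (2 * T) (refl T a)) bcP lam) /\
  (forall lam, eigenvalue n T a bcM1 lam <-> eigenvalue n T (checkc T a) bcM2 lam) /\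
  (forall lam, eigenvalue n T a bcM2 lam <-> eigenvalue n T (checkc T a) bcM1 lam).
Proof.
  intros Hn HT _ _.
  split; [intros lam; apply spectrum_periodic; auto|].
  split; [intros lam; apply spectrum_neumann; auto|].
  split; [intros lam; apply spectrum_dirichlet; auto|].
  split; [intros lam; apply spectrum_antiperiodic; auto|].
  split.
  - (* P[4T] = P[2T] for the doubled operator = N[2T] u D[2T] *)
    intros lam. replace (4 * T) with (2 * (2 * T)) by ring.
    rewrite <- spectrum_periodic, <- spectrum_neumann, <- spectrum_dirichlet by (auto; lra).
    tauto.
  - split; intros lam; rewrite eigenvalue_M1, eigenvalue_M2; apply spectrum_check; auto.
Qed.
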